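(* Let $K\subset\mathbb{R}$ be a regular compact set, let $g$ be the Green function of $\overline{\mathbb{C}}\setminus K$ with pole at infinity, and for $\delta>0$ put $G(\delta):=\max\{ g(z): z\in\mathbb{C},\ \operatorname{dist}(z,K)\le 2\delta\}$. Let $0<\tau\le 1$ and let $x_0,\ldots,x_{n-1}\in K$ be a $\tau$-quasi Leja sequence. Then for every $\delta>0$, $$|x_i-x_j|\ge \tau\delta e^{-nG(\delta)}\quad\text{for all } i,j\in\{0,\ldots,n-1\},\ i\ne j.$$
   Context: A compact set $K\subset\mathbb{C}$ is regular if the Green function $g(z)=g_{\overline{\mathbb{C}}\setminus K}(z,\infty)$ of $\overline{\mathbb{C}}\setminus K$ with pole at infinity is continuous on $\mathbb{C}$ (with $g=0$ on $K$). For $0<\tau\le1$, a sequence $x_0,\ldots,x_{n-1}\in K$ is $\tau$-quasi Leja if for every $k=1,\ldots,n-1$, $\prod_{j<k}|x_k-x_j|\ge\tau\max_{x\in K}\prod_{j<k}|x-x_j|$. *)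

From Stdlib Require Import Reals Lra.
From Stdlib Require Export Rtopology.
From Coquelicot Require Export Coquelicot.
Open Scope R_scope.

Definition RtoC (x : R) : C := (x, 0).

Definition dx (f : C -> R) (p : C) : R := Derive (fun t => f (t, snd p)) (fst p).
Definition dy (f : C -> R) (p : C) : R := Derive (fun t => f (fst p, t)) (snd p).

Definition harmonic_on (U : C -> Prop) (f : C -> R) : Prop :=
  forall p : C, U p ->
    ex_derive (fun t => f (t, snd p)) (fst p) /\
    ex_derive (fun t => f (fst p, t)) (snd p) /\
    ex_derive (fun t => dx f (t, snd p)) (fst p) /\
    ex_derive (fun t => dx f (fst p, t)) (snd p) /\
    ex_derive (fun t => dy f (t, snd p)) (fst p) /\
    ex_derive (fun t => dy f (fst p, t)) (snd p) /\
    continuous (dx (dx f)) p /\ continuous (dy (dx f)) p /\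
    continuous (dx (dy f)) p /\ continuous (dy (dy f)) p /\
    dx (dx f) p + dy (dy f) p = 0.

(* g is the Green function of (extended C) \ K with pole at infinity, and it is
   continuous on C with g = 0 on K (i.e. K is regular and g is extended by 0). *)
Definition regular_green (K : R -> Prop) (g : C -> R) : Prop :=
  (forall z : C, continuous g z) /\
  (forall x : R, K x -> g (RtoC x) = 0) /\
  harmonic_on (fun z => ~ (snd z = 0 /\ K (fst z))) g /\
  (exists M R0 : R, forall z : C, R0 < Cmod z -> Rabs (g z - ln (Cmod z)) <= M).

(* z is within distance r of K (K compact, so dist(z,K) <= r iff some point of
   K is at distance <= r). *)
Definition near_K (K : R -> Prop) (r : R) (z : C) : Prop :=
  exists w : R, K w /\ Cmod (z - RtoC w) <= r.

Definition is_G (K : R -> Prop) (g : C -> R) (delta M : R) : Prop :=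
  (forall z, near_K K (2 * delta) z -> g z <= M) /\
  (exists z, near_K K (2 * delta) z /\ g z = M).

Fixpoint prodlt (f : nat -> R) (k : nat) : R :=
  match k with O => 1 | S k' => prodlt f k' * f k' end.

Definition quasi_leja (K : R -> Prop) (tau : R) (x : nat -> R) (n : nat) : Prop :=
  (forall i, (i < n)%nat -> K (x i)) /\
  forall k, (1 <= k)%nat -> (k < n)%nat ->
    forall y, K y ->
      tau * prodlt (fun j => Rabs (y - x j)) k <= prodlt (fun j => Rabs (x k - x j)) k.

From Stdlib Require Import Reals Lra Lia Classical ClassicalEpsilon.
From Coquelicot Require Import Coquelicot.
Open Scope R_scope.

(* Fix j < i and let P(z) = prod_{l<i} (z - x_l), of degree i with all roots in K. The
   Bernstein-Walsh inequality |P(z)| <= ||P||_K e^(i g(z)) at the point z = (x_i, delta),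
   at height delta above x_i, combines with ||P||_K <= |P(x_i)| / tau (quasi-Leja) and with
   g(z) <= G(delta) (as dist(z, K) = delta). Since |z - x_l| >= |x_i - x_l| for every l,
   dividing out the factors l <> j leaves delta <= |z - x_j| <= |x_i - x_j| e^(i G(delta)) / tau.
   Bernstein-Walsh is the maximum principle for the subharmonic function
   log|P| - (i + eps) g - log c on C \ K, with eps -> 0 and c -> ||P||_K. The maximum principle
   comes from the one-variable second-derivative test at an interior maximum, after adding a
   small multiple of |z - z0|^2 to make the Laplacian strictly positive. *)

Lemma locally_R (x : R) (P : R -> Prop) :
  locally x P <-> exists d, 0 < d /\ forall t, Rabs (t - x) < d -> P t.
Proof.
  split.
  - intros [d Hd]. exists d. split; [apply cond_pos|]. intros t Ht. apply Hd. exact Ht.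
  - intros [d [Hd HP]]. exists (mkposreal d Hd). intros t Ht. apply HP. exact Ht.
Qed.

Lemma locally_C (z : C) (P : C -> Prop) :
  locally z P <-> exists d, 0 < d /\
    forall y : C, Rabs (fst y - fst z) < d -> Rabs (snd y - snd z) < d -> P y.
Proof.
  split.
  - intros [d Hd]. exists d. split; [apply cond_pos|]. intros y H1 H2. apply Hd. split; assumption.
  - intros [d [Hd HP]]. exists (mkposreal d Hd). intros y [H1 H2]. apply HP; assumption.
Qed.

Lemma locally_horizontal (z : C) (P : C -> Prop) :
  locally z P -> locally (fst z) (fun t => P (t, snd z)).
Proof.
  intros [d Hd]. exists d. intros t Ht. apply Hd. split; [exact Ht | apply ball_center].
Qed.

Lemma locally_vertical (z : C) (P : C -> Prop) :
  locally z P -> locally (snd z) (fun s => P (fst z, s)).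
Proof.
  intros [d Hd]. exists d. intros s Hs. apply Hd. split; [apply ball_center | exact Hs].
Qed.

Lemma continuous_C_Rabs (f : C -> R) (z : C) :
  continuous f z -> forall e, 0 < e -> exists d, 0 < d /\
    forall y : C, Rabs (fst y - fst z) < d -> Rabs (snd y - snd z) < d -> Rabs (f y - f z) < e.
Proof.
  intros Hc e He. apply locally_C. exact (proj1 (filterlim_locally _ _) Hc (mkposreal e He)).
Qed.

Lemma continuous_locally_pos (f : C -> R) (z : C) :
  continuous f z -> 0 < f z -> locally z (fun y => 0 < f y).
Proof.
  intros Hf Hz. refine (filter_imp _ _ _ (proj1 (filterlim_locally _ _) Hf (mkposreal _ Hz))).
  intros y Hy. destruct (Rabs_def2 _ _ Hy) as [_ Hlow].
  unfold minus, plus, opp in Hlow. simpl in Hlow. lra.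
Qed.

Lemma Rdiv_pos_sign (a b : R) : 0 < a / b -> (0 < b -> 0 < a) /\ (b < 0 -> a < 0).
Proof.
  intros Hab. split; intros Hb; replace a with (a / b * b) by (field; lra); nra.
Qed.

Lemma exp_le_compat (x y : R) : x <= y -> exp x <= exp y.
Proof.
  intros [Hxy|Hxy]; [left; apply exp_increasing; exact Hxy | right; rewrite Hxy; reflexivity].
Qed.

Lemma continuous_Rmax_cst (c x : R) : continuous (fun a => Rmax a c) x.
Proof.
  apply continuity_pt_filterlim, continuity_pt_locally. intros e.
  apply locally_R. exists e. split; [apply cond_pos|]. intros t Ht.
  eapply Rle_lt_trans; [|exact Ht]. unfold Rmax.
  repeat destruct Rle_dec; unfold Rabs; repeat destruct Rcase_abs; lra.
Qed.

Lemma prodlt_ext (f h : nat -> R) (k : nat) :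
  (forall l, (l < k)%nat -> f l = h l) -> prodlt f k = prodlt h k.
Proof.
  induction k as [|k IH]; intros Hfh; simpl; [reflexivity|].
  rewrite IH by (intros l Hl; apply Hfh; lia). rewrite Hfh by lia. reflexivity.
Qed.

Lemma prodlt_nonneg (f : nat -> R) (k : nat) :
  (forall l, (l < k)%nat -> 0 <= f l) -> 0 <= prodlt f k.
Proof.
  induction k as [|k IH]; intros Hf; simpl; [lra|].
  apply Rmult_le_pos; [apply IH; intros; apply Hf; lia | apply Hf; lia].
Qed.

Lemma prodlt_le_compat (f h : nat -> R) (k : nat) :
  (forall l, (l < k)%nat -> 0 <= f l <= h l) -> prodlt f k <= prodlt h k.
Proof.
  induction k as [|k IH]; intros Hfh; simpl; [lra|].
  apply Rmult_le_compat; [apply prodlt_nonneg; intros; apply Hfh; lia | apply Hfh; lia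
                         | apply IH; intros; apply Hfh; lia | apply Hfh; lia].
Qed.

Lemma prodlt_pos (f : nat -> R) (k : nat) :
  (forall l, (l < k)%nat -> 0 < f l) -> 0 < prodlt f k.
Proof.
  induction k as [|k IH]; intros Hf; simpl; [lra|].
  apply Rmult_lt_0_compat; [apply IH; intros; apply Hf; lia | apply Hf; lia].
Qed.

Lemma prodlt_split (f : nat -> R) (k j : nat) : (j < k)%nat ->
  prodlt f k = prodlt (fun l => if Nat.eqb l j then 1 else f l) k * f j.
Proof.
  induction k as [|k IH]; intros Hj; [lia|]. cbn [prodlt].
  destruct (Nat.eq_dec j k) as [->|Hjk].
  - rewrite Nat.eqb_refl, (prodlt_ext (fun l => if Nat.eqb l k then 1 else f l) f); [ring|].
    intros l Hl. destruct (Nat.eqb_spec l k); [lia | reflexivity].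
  - replace (Nat.eqb k j) with false by (symmetry; apply Nat.eqb_neq; lia).
    rewrite IH by lia. ring.
Qed.

Fixpoint sumlt (f : nat -> R) (k : nat) : R :=
  match k with O => 0 | S k' => sumlt f k' + f k' end.

Lemma sumlt_le_const (f : nat -> R) (m : nat) (B : R) :
  (forall l, (l < m)%nat -> f l <= B) -> sumlt f m <= INR m * B.
Proof.
  induction m as [|m IH]; intros Hf; [simpl; lra|]. cbn [sumlt].
  rewrite S_INR. generalize (IH (fun l Hl => Hf l ltac:(lia))) (Hf m ltac:(lia)). lra.
Qed.

Lemma ex_upper_bound_lt (f : nat -> R) (m : nat) : exists A, forall l, (l < m)%nat -> f l <= A.
Proof.
  induction m as [|m [A HA]]; [exists 0; intros; lia|].
  exists (Rmax A (f m)). intros l Hl. destruct (Nat.eq_dec l m) as [->|Hlm].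
  - apply Rmax_r.
  - apply Rle_trans with A; [apply HA; lia | apply Rmax_l].
Qed.

Definition in_square (r : R) (y : C) : Prop := Rabs (fst y) <= r /\ Rabs (snd y) <= r.

Definition sqr_dist (w y : C) : R := (fst y - fst w) ^ 2 + (snd y - snd w) ^ 2.

Lemma sqr_dist_pos (w z : C) : z <> w -> 0 < sqr_dist w z.
Proof.
  intros Hzw. unfold sqr_dist.
  destruct (Req_dec (fst z) (fst w)) as [H1|H1].
  - destruct (Req_dec (snd z) (snd w)) as [H2|H2].
    + destruct Hzw. destruct z, w. simpl in *. now subst.
    + generalize (pow2_ge_0 (fst z - fst w)) (pow2_gt_0 (snd z - snd w) ltac:(lra)). lra.
  - generalize (pow2_gt_0 (fst z - fst w) ltac:(lra)) (pow2_ge_0 (snd z - snd w)). lra.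
Qed.

Lemma sqr_dist_le_square (s : R) (w y : C) :
  in_square s w -> in_square s y -> sqr_dist w y <= 8 * s ^ 2.
Proof.
  intros [Hw1 Hw2] [Hy1 Hy2]. unfold sqr_dist.
  apply Rabs_le_between in Hw1, Hw2, Hy1, Hy2. nra.
Qed.

Lemma continuous_sqr_dist (w z : C) : continuous (sqr_dist w) z.
Proof.
  unfold sqr_dist.
  apply (@continuous_plus C_UniformSpace R_AbsRing R_NormedModule
           (fun y : C => (fst y - fst w) ^ 2) (fun y : C => (snd y - snd w) ^ 2)).
  - apply (continuous_comp fst (fun t => (t - fst w) ^ 2)).
    + destruct z. apply continuous_fst.
    + apply (@ex_derive_continuous R_AbsRing R_NormedModule). auto_derive. easy.
  - apply (continuous_comp snd (fun s => (s - snd w) ^ 2)).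
    + destruct z. apply continuous_snd.
    + apply (@ex_derive_continuous R_AbsRing R_NormedModule). auto_derive. easy.
Qed.

Lemma Cmod_sub (w y : C) : Cmod (y - w) = sqrt (sqr_dist w y).
Proof. unfold Cmod, sqr_dist. destruct y, w. simpl. f_equal. Qed.

Lemma ln_Cmod_sub (w y : C) : ln (Cmod (y - w)) = ln (sqr_dist w y) / 2.
Proof.
  rewrite Cmod_sub.
  assert (Hq : 0 <= sqr_dist w y)
    by (unfold sqr_dist; generalize (pow2_ge_0 (fst y - fst w)) (pow2_ge_0 (snd y - snd w)); lra).
  destruct (Req_dec (sqr_dist w y) 0) as [Hq0|Hq0].
  - (* Stdlib's [ln] is 0 on nonpositive arguments *)
    rewrite Hq0, sqrt_0. unfold ln.
    destruct (Rlt_dec 0 0) as [H0|_]; [destruct (Rlt_irrefl 0 H0) | lra].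
  - rewrite <- (sqrt_sqrt (sqr_dist w y)) at 2 by exact Hq.
    rewrite ln_mult by (apply sqrt_lt_R0; lra). lra.
Qed.

Lemma Cmod_sub_pos (w z : C) : z <> w -> 0 < Cmod (z - w).
Proof. intros Hz. rewrite Cmod_sub. apply sqrt_lt_R0, sqr_dist_pos, Hz. Qed.

Lemma continuous_Cmod_sub (w z : C) : continuous (fun y => Cmod (y - w)) z.
Proof.
  apply (continuous_ext (fun y => sqrt (sqr_dist w y))); [intros y; symmetry; apply Cmod_sub|].
  apply (continuous_comp (sqr_dist w) sqrt); [apply continuous_sqr_dist|].
  apply continuity_pt_filterlim, continuity_pt_sqrt.
  unfold sqr_dist. generalize (pow2_ge_0 (fst z - fst w)) (pow2_ge_0 (snd z - snd w)). lra.
Qed.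

Lemma Cmod_RtoC_sub (y a : R) : Cmod (RtoC y - RtoC a) = Rabs (y - a).
Proof. rewrite <- Cmod_R. f_equal. apply injective_projections; simpl; ring. Qed.

Lemma Cmod_sub_RtoC_ge (y : C) (a : R) :
  Rabs (fst y - a) <= Cmod (y - RtoC a) /\ Rabs (snd y) <= Cmod (y - RtoC a).
Proof.
  generalize (Rmax_Cmod (y - RtoC a)%C). simpl. rewrite Ropp_0, Rplus_0_r.
  generalize (Rmax_l (Rabs (fst y + - a)) (Rabs (snd y)))
    (Rmax_r (Rabs (fst y + - a)) (Rabs (snd y))).
  unfold Rminus. lra.
Qed.

(** * Laplacians along coordinate lines *)

Lemma is_derive_pos_slope (f : R -> R) (x D : R) :
  is_derive f x D -> 0 < D ->
  exists d, 0 < d /\ forall h, h <> 0 -> Rabs h < d -> 0 < (f (x + h) - f x) / h.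
Proof.
  intros HD HD0. apply is_derive_Reals in HD.
  destruct (HD D HD0) as [d Hd]. exists d. split; [apply cond_pos|].
  intros h Hh0 Hh. destruct (Rabs_def2 _ _ (Hd h Hh0 Hh)) as [_ Hlow]. lra.
Qed.

(* By the mean value theorem, f' takes a value <= 0 just right of x and >= 0 just left of x,
   while f'' (x) > 0 would make f' increase through x. *)
Lemma second_derivative_test (f f' : R -> R) (x D : R) :
  locally x (fun t => is_derive f t (f' t)) -> locally x (fun t => f t <= f x) ->
  is_derive f' x D -> D <= 0.
Proof.
  intros Hder Hmax HD.
  destruct (proj1 (locally_R _ _) (filter_and _ _ Hder Hmax)) as [r [Hr Hloc]].
  destruct (Rle_or_lt D 0) as [|HD0]; [assumption|exfalso].
  destruct (is_derive_pos_slope f' x D HD HD0) as [d [Hd Hslope]].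
  set (h := Rmin r d / 2).
  assert (Hh : 0 < h /\ h < r /\ h < d).
  { unfold h. generalize (Rmin_l r d) (Rmin_r r d) (Rmin_glb_lt r d 0 Hr Hd). lra. }
  assert (Hmvt : forall a, Rabs (a - x) <= h -> Rabs (a + h - x) <= h ->
            exists c, f (a + h) - f a = f' c * h /\ a < c < a + h).
  { intros a Ha1 Ha2. destruct (MVT_cor2 f f' a (a + h)) as [c [Hc1 Hc2]]; [lra| |].
    - intros c Hc. apply is_derive_Reals, Hloc.
      apply Rabs_le_between in Ha1, Ha2. apply Rabs_def1; lra.
    - exists c. split; [rewrite Hc1; ring | exact Hc2]. }
  destruct (Hmvt x) as [c1 [Hc1 Hc1']];
    [rewrite Rminus_diag, Rabs_R0; lra
    |replace (x + h - x) with h by ring; rewrite Rabs_pos_eq; lra|].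
  destruct (Hmvt (x - h)) as [c2 [Hc2 Hc2']];
    [replace (x - h - x) with (- h) by ring; rewrite Rabs_Ropp, Rabs_pos_eq; lra
    |replace (x - h + h - x) with 0 by ring; rewrite Rabs_R0; lra|].
  replace (x - h + h) with x in Hc2 by ring.
  assert (Hf1 : f (x + h) <= f x) by (apply Hloc; rewrite Rabs_pos_eq; lra).
  assert (Hf2 : f (x - h) <= f x)
    by (apply Hloc; replace (x - h - x) with (- h) by ring; rewrite Rabs_Ropp, Rabs_pos_eq; lra).
  assert (Hs1 := Hslope (c1 - x) ltac:(lra) ltac:(rewrite Rabs_pos_eq; lra)).
  assert (Hs2 := Hslope (c2 - x) ltac:(lra)
                   ltac:(rewrite Rabs_left; lra)).
  replace (x + (c1 - x)) with c1 in Hs1 by ring.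
  replace (x + (c2 - x)) with c2 in Hs2 by ring.
  apply Rdiv_pos_sign in Hs1 as [Hs1 _]. apply Rdiv_pos_sign in Hs2 as [_ Hs2].
  specialize (Hs1 ltac:(lra)). specialize (Hs2 ltac:(lra)).
  nra.
Qed.

(* Only the second derivatives along the two axis-parallel lines through [z] are required:
   that is all the second-derivative test at a maximum uses. *)
Definition has_laplacian (u : C -> R) (z : C) (L : R) : Prop :=
  exists ux uy : R -> R,
    locally (fst z) (fun t => is_derive (fun t => u (t, snd z)) t (ux t)) /\
    locally (snd z) (fun s => is_derive (fun s => u (fst z, s)) s (uy s)) /\
    exists Dxx Dyy, is_derive ux (fst z) Dxx /\ is_derive uy (snd z) Dyy /\ Dxx + Dyy = L.

Lemma has_laplacian_ext (u v : C -> R) (z : C) (L : R) :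
  (forall y, u y = v y) -> has_laplacian u z L -> has_laplacian v z L.
Proof.
  intros Huv [ux [uy [Hux [Huy HD]]]]. exists ux, uy. split; [|split; [|exact HD]].
  - apply (filter_imp _ _ (fun t H => is_derive_ext _ _ t _ (fun t' => Huv (t', snd z)) H) Hux).
  - apply (filter_imp _ _ (fun s H => is_derive_ext _ _ s _ (fun s' => Huv (fst z, s')) H) Huy).
Qed.

Lemma has_laplacian_plus (u v : C -> R) (z : C) (Lu Lv : R) :
  has_laplacian u z Lu -> has_laplacian v z Lv ->
  has_laplacian (fun y => u y + v y) z (Lu + Lv).
Proof.
  intros [ux [uy [Hux [Huy [Uxx [Uyy [HUxx [HUyy HLu]]]]]]]]
         [vx [vy [Hvx [Hvy [Vxx [Vyy [HVxx [HVyy HLv]]]]]]]].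
  exists (fun t => ux t + vx t), (fun s => uy s + vy s). split; [|split].
  - apply (filter_imp _ _ (fun t H => is_derive_plus _ _ t _ _ (proj1 H) (proj2 H))
                        (filter_and _ _ Hux Hvx)).
  - apply (filter_imp _ _ (fun s H => is_derive_plus _ _ s _ _ (proj1 H) (proj2 H))
                        (filter_and _ _ Huy Hvy)).
  - exists (Uxx + Vxx), (Uyy + Vyy).
    split; [|split]; [apply (is_derive_plus ux vx) | apply (is_derive_plus uy vy) | lra];
      assumption.
Qed.

Lemma has_laplacian_scal (k : R) (u : C -> R) (z : C) (L : R) :
  has_laplacian u z L -> has_laplacian (fun y => k * u y) z (k * L).
Proof.
  intros [ux [uy [Hux [Huy [Uxx [Uyy [HUxx [HUyy HL]]]]]]]].
  exists (fun t => k * ux t), (fun s => k * uy s). split; [|split].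
  - apply (filter_imp _ _ (fun t H => is_derive_scal _ t k _ H) Hux).
  - apply (filter_imp _ _ (fun s H => is_derive_scal _ s k _ H) Huy).
  - exists (k * Uxx), (k * Uyy). split; [|split].
    + now apply (is_derive_scal ux).
    + now apply (is_derive_scal uy).
    + rewrite <- HL. ring.
Qed.

Lemma has_laplacian_const (c : R) (z : C) : has_laplacian (fun _ => c) z 0.
Proof.
  exists (fun _ => 0), (fun _ => 0). split; [|split].
  - apply filter_forall. intros t. exact (is_derive_const c t).
  - apply filter_forall. intros s. exact (is_derive_const c s).
  - exists 0, 0.
    split; [|split]; [exact (is_derive_const 0 _) | exact (is_derive_const 0 _) | ring].
Qed.

Lemma has_laplacian_sumlt (F : nat -> C -> R) (m : nat) (z : C) :
  (forall l, (l < m)%nat -> has_laplacian (F l) z 0) ->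
  has_laplacian (fun y => sumlt (fun l => F l y) m) z 0.
Proof.
  induction m as [|m IH]; intros HF; simpl.
  - apply has_laplacian_const.
  - rewrite <- (Rplus_0_r 0). apply (has_laplacian_plus (fun y => sumlt (fun l => F l y) m) (F m)).
    + apply IH. intros l Hl. apply HF. lia.
    + apply HF. lia.
Qed.

Lemma has_laplacian_sqr_dist (w z : C) : has_laplacian (sqr_dist w) z 4.
Proof.
  exists (fun t => 2 * (t - fst w)), (fun s => 2 * (s - snd w)). split; [|split].
  - apply filter_forall. intros t. unfold sqr_dist. simpl. auto_derive; [easy | ring].
  - apply filter_forall. intros s. unfold sqr_dist. simpl. auto_derive; [easy | ring].
  - exists 2, 2. split; [|split]; [auto_derive; [easy | ring] | auto_derive; [easy | ring] | ring].
Qed.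

Lemma has_laplacian_log_dist (w z : C) :
  z <> w -> has_laplacian (fun y => ln (Cmod (y - w))) z 0.
Proof.
  intros Hz. assert (Hz0 := sqr_dist_pos w z Hz).
  assert (Hpos := continuous_locally_pos _ z (continuous_sqr_dist w z) Hz0).
  unfold sqr_dist in Hpos, Hz0.
  apply (has_laplacian_ext (fun y => ln (sqr_dist w y) / 2));
    [intros y; symmetry; apply ln_Cmod_sub|]. unfold sqr_dist.
  exists (fun t => (t - fst w) / ((t - fst w) ^ 2 + (snd z - snd w) ^ 2)),
         (fun s => (s - snd w) / ((fst z - fst w) ^ 2 + (s - snd w) ^ 2)). split; [|split].
  - refine (filter_imp _ _ _ (locally_horizontal z _ Hpos)). intros t Ht. simpl in Ht.
    cbn [fst snd]. auto_derive; [lra | field; lra].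
  - refine (filter_imp _ _ _ (locally_vertical z _ Hpos)). intros s Hs. simpl in Hs.
    cbn [fst snd]. auto_derive; [lra | field; lra].
  - exists (((snd z - snd w) ^ 2 - (fst z - fst w) ^ 2) /
              ((fst z - fst w) ^ 2 + (snd z - snd w) ^ 2) ^ 2),
           (((fst z - fst w) ^ 2 - (snd z - snd w) ^ 2) /
              ((fst z - fst w) ^ 2 + (snd z - snd w) ^ 2) ^ 2).
    split; [|split]; [auto_derive; [lra | field; lra] | auto_derive; [lra | field; lra] |].
    field. lra.
Qed.

Lemma harmonic_on_has_laplacian (U : C -> Prop) (g : C -> R) (z : C) :
  open U -> harmonic_on U g -> U z -> has_laplacian g z 0.
Proof.
  intros HU Hg Hz.
  exists (fun t => dx g (t, snd z)), (fun s => dy g (fst z, s)). split; [|split].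
  - refine (filter_imp _ _ _ (locally_horizontal z U (HU z Hz))).
    intros t Ht. exact (Derive_correct _ _ (proj1 (Hg _ Ht))).
  - refine (filter_imp _ _ _ (locally_vertical z U (HU z Hz))).
    intros s Hs. exact (Derive_correct _ _ (proj1 (proj2 (Hg _ Hs)))).
  - destruct (Hg z Hz) as [_ [_ [Hxx [_ [_ [Hyy [_ [_ [_ [_ Hlap]]]]]]]]]].
    exists (dx (dx g) z), (dy (dy g) z).
    split; [|split; [|exact Hlap]]; apply Derive_correct; assumption.
Qed.

Lemma has_laplacian_local_max (u : C -> R) (z : C) (L : R) :
  has_laplacian u z L -> locally z (fun y => u y <= u z) -> L <= 0.
Proof.
  intros [ux [uy [Hux [Huy [Dxx [Dyy [HDxx [HDyy <-]]]]]]]] Hmax.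
  assert (Hxx : Dxx <= 0).
  { apply (second_derivative_test (fun t => u (t, snd z)) ux (fst z)); [exact Hux| |exact HDxx].
    rewrite <- surjective_pairing. exact (locally_horizontal z _ Hmax). }
  assert (Hyy : Dyy <= 0).
  { apply (second_derivative_test (fun s => u (fst z, s)) uy (snd z)); [exact Huy| |exact HDyy].
    rewrite <- surjective_pairing. exact (locally_vertical z _ Hmax). }
  lra.
Qed.

(** * Maximum principle *)

Lemma square_uniform_continuity (phi : C -> R) (r : R) :
  (forall y, in_square r y -> continuous phi y) ->
  forall e, 0 < e -> exists d, 0 < d /\ forall y y' : C, in_square r y -> in_square r y' ->
    Rabs (fst y - fst y') < d -> Rabs (snd y - snd y') < d -> Rabs (phi y - phi y') < e.
Proof.
  intros Hc e He.
  assert (Hdelta : forall u v : R, {d : posreal | in_square r (u, v) ->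
     forall y : C, Rabs (fst y - u) < 2 * d -> Rabs (snd y - v) < 2 * d ->
       Rabs (phi y - phi (u, v)) < e / 2}).
  { intros u v. apply constructive_indefinite_description.
    destruct (classic (in_square r (u, v))) as [Huv|Huv].
    - destruct (continuous_C_Rabs _ _ (Hc _ Huv) (e / 2) ltac:(lra)) as [d [Hd Hphi]].
      exists (mkposreal (d / 2) ltac:(lra)). intros _ y Hy1 Hy2. apply Hphi; simpl in *; lra.
    - exists (mkposreal 1 Rlt_0_1). intros Huv'. contradiction. }
  destruct (compactness_value_2d (- r) r (- r) r (fun u v => proj1_sig (Hdelta u v))) as [d Hd].
  exists d. split; [apply cond_pos|]. intros y y' [Hy1 Hy2] Hy' H1 H2.
  apply Rabs_le_between in Hy1, Hy2.
  apply NNPP. intros Hne. apply (Hd (fst y) (snd y) Hy1 Hy2).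
  intros [u [v [Hu [Hv [Hyu [Hyv Hdu]]]]]]. apply Hne.
  pose proof (proj2_sig (Hdelta u v)) as Hdu'. simpl in Hyu, Hyv, Hdu, Hdu'.
  set (du := proj1_sig (Hdelta u v)) in *. assert (Hdu0 := cond_pos du).
  assert (Huv : in_square r (u, v)) by (split; apply Rabs_le; simpl; lra).
  assert (Hy'u : Rabs (fst y' - u) < 2 * du).
  { replace (fst y' - u) with ((fst y - u) - (fst y - fst y')) by ring.
    eapply Rle_lt_trans; [apply Rabs_triang|]. rewrite Rabs_Ropp. lra. }
  assert (Hy'v : Rabs (snd y' - v) < 2 * du).
  { replace (snd y' - v) with ((snd y - v) - (snd y - snd y')) by ring.
    eapply Rle_lt_trans; [apply Rabs_triang|]. rewrite Rabs_Ropp. lra. }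
  assert (E1 := Hdu' Huv y ltac:(lra) ltac:(lra)).
  assert (E2 := Hdu' Huv y' Hy'u Hy'v).
  replace (phi y - phi y') with ((phi y - phi (u, v)) - (phi y' - phi (u, v))) by ring.
  eapply Rle_lt_trans; [apply Rabs_triang|]. rewrite Rabs_Ropp. lra.
Qed.

Lemma uniformly_continuous_max_square (f : R -> R -> R) (r : R) : 0 <= r ->
  (forall e, 0 < e -> exists d, 0 < d /\ forall t s t' s',
     Rabs (t - t') < d -> Rabs (s - s') < d -> Rabs (f t s - f t' s') < e) ->
  exists t0 s0, -r <= t0 <= r /\ -r <= s0 <= r /\
    forall t s, -r <= t <= r -> -r <= s <= r -> f t s <= f t0 s0.
Proof.
  intros Hr Hunif.
  assert (Hcont : forall s t, continuity_pt (fun t => f t s) t).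
  { intros s t. apply continuity_pt_locally. intros e. apply locally_R.
    destruct (Hunif e (cond_pos e)) as [d [Hd Hf]]. exists d. split; [exact Hd|].
    intros t' Ht'. apply Hf; [exact Ht' | rewrite Rminus_diag, Rabs_R0; exact Hd]. }
  assert (Hargmax : forall s, {t | -r <= t <= r /\ forall c, -r <= c <= r -> f c s <= f t s}).
  { intros s. apply constructive_indefinite_description.
    destruct (continuity_ab_maj (fun t => f t s) (- r) r) as [t [Ht1 Ht2]];
      [lra | intros c _; apply Hcont|].
    exists t. split; assumption. }
  set (m := fun s => f (proj1_sig (Hargmax s)) s).
  assert (Hm : forall s s' e, (forall t, Rabs (f t s - f t s') < e) -> m s' < m s + e).
  { intros s s' e Hss'. unfold m.
    destruct (proj2_sig (Hargmax s)) as [_ Hmax], (proj2_sig (Hargmax s')) as [Ht' _].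
    destruct (Rabs_def2 _ _ (Hss' (proj1_sig (Hargmax s')))) as [_ Hlow].
    generalize (Hmax _ Ht'). lra. }
  assert (Hmcont : forall s, continuity_pt m s).
  { intros s. apply continuity_pt_locally. intros e. apply locally_R.
    destruct (Hunif e (cond_pos e)) as [d [Hd Hf]]. exists d. split; [exact Hd|].
    intros s' Hs'. assert (Hs's : Rabs (s - s') < d) by (rewrite Rabs_minus_sym; exact Hs').
    apply Rabs_def1.
    - assert (H := Hm s s' e (fun t => Hf t s t s' ltac:(rewrite Rminus_diag, Rabs_R0; lra) Hs's)).
      lra.
    - assert (H := Hm s' s e (fun t => Hf t s' t s ltac:(rewrite Rminus_diag, Rabs_R0; lra) Hs')).
      lra. }
  destruct (continuity_ab_maj m (- r) r) as [s0 [Hs0max Hs0]]; [lra | intros; apply Hmcont|].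
  exists (proj1_sig (Hargmax s0)), s0.
  split; [exact (proj1 (proj2_sig (Hargmax s0))) | split; [exact Hs0|]].
  intros t s Ht Hs. apply Rle_trans with (m s); [|exact (Hs0max s Hs)].
  exact (proj2 (proj2_sig (Hargmax s)) t Ht).
Qed.

(* Composing with [clamp r] extends a function on the square [in_square r] to the whole plane
   without losing uniform continuity, so that [continuity_ab_maj] applies on each line. *)
Definition clamp (r x : R) : R := Rmax (- r) (Rmin r x).

Lemma clamp_in (r x : R) : 0 <= r -> Rabs (clamp r x) <= r.
Proof. intros. unfold clamp, Rmax, Rmin. apply Rabs_le. repeat destruct Rle_dec; lra. Qed.

Lemma clamp_id (r x : R) : Rabs x <= r -> clamp r x = x.
Proof.
  intros H. apply Rabs_le_between in H. unfold clamp, Rmax, Rmin. repeat destruct Rle_dec; lra.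
Qed.

Lemma clamp_lipschitz (r x y : R) : 0 <= r -> Rabs (clamp r x - clamp r y) <= Rabs (x - y).
Proof.
  intros. unfold clamp, Rmax, Rmin.
  repeat destruct Rle_dec; unfold Rabs; repeat destruct Rcase_abs; lra.
Qed.

Lemma continuous_max_square (phi : C -> R) (r : R) : 0 <= r ->
  (forall y, in_square r y -> continuous phi y) ->
  exists zs, in_square r zs /\ forall y, in_square r y -> phi y <= phi zs.
Proof.
  intros Hr Hc.
  destruct (uniformly_continuous_max_square (fun t s => phi (clamp r t, clamp r s)) r Hr)
    as [t0 [s0 [Ht0 [Hs0 Hmax]]]].
  - intros e He. destruct (square_uniform_continuity phi r Hc e He) as [d [Hd Hphi]].
    exists d. split; [exact Hd|]. intros t s t' s' Ht Hs.
    apply Hphi; try (split; apply clamp_in; exact Hr);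
      eapply Rle_lt_trans; try apply clamp_lipschitz; assumption.
  - apply Rabs_le in Ht0, Hs0.
    exists (t0, s0). split; [split; assumption|].
    intros y [Hy1 Hy2].
    specialize (Hmax (fst y) (snd y)
                  (proj1 (Rabs_le_between _ _) Hy1) (proj1 (Rabs_le_between _ _) Hy2)).
    simpl in Hmax. rewrite !clamp_id in Hmax by assumption.
    rewrite <- surjective_pairing in Hmax. exact Hmax.
Qed.

Lemma locally_in_square (r : R) (y : C) :
  Rabs (fst y) < r -> Rabs (snd y) < r -> locally y (in_square r).
Proof.
  intros Hy1 Hy2. apply locally_C. exists (Rmin (r - Rabs (fst y)) (r - Rabs (snd y))).
  split; [apply Rmin_glb_lt; lra|]. intros y' H1 H2.
  apply Rmin_Rgt_l in H1 as [H1 _], H2 as [_ H2].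
  split; [replace (fst y') with ((fst y' - fst y) + fst y) by ring
         |replace (snd y') with ((snd y' - snd y) + snd y) by ring];
    (eapply Rle_trans; [apply Rabs_triang|]); lra.
Qed.

Lemma ex_interior_local_max (D : C -> Prop) (psi : C -> R) (r c : R) :
  open D -> 0 <= r ->
  (forall y, D y -> continuous psi y) ->
  (forall y, ~ D y -> in_square r y -> locally y (fun y' => D y' -> psi y' < c)) ->
  (forall y, D y -> in_square r y -> r <= Rabs (fst y) \/ r <= Rabs (snd y) -> psi y < c) ->
  forall y0, D y0 -> in_square r y0 -> c < psi y0 ->
  exists zs, D zs /\ locally zs (fun y => psi y <= psi zs).
Proof.
  intros HD Hr Hcont Hout Hedge y0 Hy0 Hy0sq Hy0c.
  set (phi := fun y => if excluded_middle_informative (D y) then Rmax (psi y) c else c).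
  assert (Hphi : forall y, D y -> phi y = Rmax (psi y) c).
  { intros y Hy. unfold phi. destruct excluded_middle_informative; [reflexivity|contradiction]. }
  assert (Hphi_cont : forall y, in_square r y -> continuous phi y).
  { intros y Hy. destruct (classic (D y)) as [HDy|HDy].
    - apply (continuous_ext_loc phi (fun y => Rmax (psi y) c)).
      + refine (filter_imp _ _ _ (HD y HDy)). intros y' Hy'. symmetry. exact (Hphi y' Hy').
      + apply (continuous_comp psi (fun a => Rmax a c));
          [exact (Hcont y HDy) | apply continuous_Rmax_cst].
    - apply (continuous_ext_loc phi (fun _ => c)); [|apply continuous_const].
      refine (filter_imp _ _ _ (Hout y HDy Hy)). intros y' Hy'. unfold phi.
      destruct excluded_middle_informative as [HDy'|]; [|reflexivity].
      specialize (Hy' HDy'). unfold Rmax. destruct Rle_dec; lra. }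
  destruct (continuous_max_square phi r Hr Hphi_cont) as [zs [Hzs Hmax]].
  assert (Hzs_c : c < phi zs).
  { apply Rlt_le_trans with (phi y0); [|exact (Hmax y0 Hy0sq)].
    rewrite (Hphi y0 Hy0). eapply Rlt_le_trans; [exact Hy0c | apply Rmax_l]. }
  assert (HzsD : D zs).
  { apply NNPP. intros HDzs. unfold phi in Hzs_c.
    destruct excluded_middle_informative; [contradiction | lra]. }
  rewrite (Hphi zs HzsD) in Hzs_c, Hmax.
  assert (Hpsi_zs : c < psi zs /\ Rmax (psi zs) c = psi zs)
    by (unfold Rmax in *; destruct Rle_dec; lra).
  destruct Hpsi_zs as [Hpsi_zs Hmax_zs]. rewrite Hmax_zs in Hmax.
  assert (Hint : Rabs (fst zs) < r /\ Rabs (snd zs) < r).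
  { destruct (Rlt_or_le (Rabs (fst zs)) r) as [H1|H1], (Rlt_or_le (Rabs (snd zs)) r) as [H2|H2];
      try (generalize (Hedge zs HzsD Hzs ltac:(tauto)); lra). tauto. }
  exists zs. split; [exact HzsD|].
  assert (Hsq := locally_in_square r zs (proj1 Hint) (proj2 Hint)).
  refine (filter_imp _ _ _ (filter_and _ _ (HD zs HzsD) Hsq)). intros y [HDy Hy].
  apply Rle_trans with (phi y); [rewrite (Hphi y HDy); apply Rmax_l | exact (Hmax y Hy)].
Qed.

Lemma subharmonic_max_principle (D : C -> Prop) (u : C -> R) :
  open D ->
  (forall z, D z -> continuous u z) ->
  (forall z, D z -> exists L, 0 <= L /\ has_laplacian u z L) ->
  (forall z, ~ D z -> forall e, 0 < e -> locally z (fun y => D y -> u y < e)) ->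
  (exists R0, forall z, D z -> R0 <= Cmod z -> u z <= 0) ->
  forall z, D z -> u z <= 0.
Proof.
  intros HD Hcont Hsub Hbdry [R0 Hinf] z0 Hz0.
  destruct (Rle_or_lt (u z0) 0) as [|Hth]; [assumption|exfalso].
  set (th := u z0) in *.
  set (r := Rabs R0 + Cmod z0 + 1).
  assert (Hr : 0 <= r) by (unfold r; generalize (Rabs_pos R0) (Cmod_ge_0 z0); lra).
  assert (Hz0sq : in_square r z0).
  { generalize (Rmax_Cmod z0) (Rmax_l (Rabs (fst z0)) (Rabs (snd z0)))
      (Rmax_r (Rabs (fst z0)) (Rabs (snd z0))) (Rabs_pos R0). unfold r. split; lra. }
  (* [eta * sqr_dist z0] has positive Laplacian but stays below [th / 8] on the square *)
  set (eta := th / (64 * (r + 1) ^ 2)).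
  assert (Heta : 0 < eta)
    by (apply Rdiv_lt_0_compat; [lra | apply Rmult_lt_0_compat; [lra | apply pow_lt; lra]]).
  assert (Hsmall : forall y, in_square (r + 1) y -> eta * sqr_dist z0 y <= th / 8).
  { intros y Hy. apply Rle_trans with (eta * (8 * (r + 1) ^ 2)).
    - apply Rmult_le_compat_l; [lra|]. apply sqr_dist_le_square; [|exact Hy].
      destruct Hz0sq. split; lra.
    - unfold eta. right. field. lra. }
  destruct (ex_interior_local_max D (fun y => u y + eta * sqr_dist z0 y) r (th / 2) HD Hr)
    with (y0 := z0) as [zs [HzsD Hlocmax]].
  - intros y Hy.
    apply (@continuous_plus C_UniformSpace R_AbsRing R_NormedModule u); [exact (Hcont y Hy)|].
    apply (@continuous_scal C_UniformSpace R_AbsRing R_NormedModule (fun _ => eta));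
      [apply continuous_const | apply continuous_sqr_dist].
  - intros y Hy Hysq.
    assert (Hnear := Hbdry y Hy (th / 4) ltac:(lra)).
    destruct Hysq as [Hy1 Hy2].
    assert (Hwide := locally_in_square (r + 1) y ltac:(lra) ltac:(lra)).
    refine (filter_imp _ _ _ (filter_and _ _ Hnear Hwide)).
    intros y' [Hu Hy'sq] Hy'. generalize (Hu Hy') (Hsmall y' Hy'sq). lra.
  - intros y Hy [Hy1 Hy2] Hedge.
    assert (HR0 : R0 <= Cmod y).
    { generalize (Rmax_Cmod y) (Rmax_l (Rabs (fst y)) (Rabs (snd y)))
        (Rmax_r (Rabs (fst y)) (Rabs (snd y))) (Rle_abs R0) (Cmod_ge_0 z0).
      unfold r in *. lra. }
    generalize (Hinf y Hy HR0) (Hsmall y ltac:(split; lra)). lra.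
  - exact Hz0.
  - exact Hz0sq.
  - unfold sqr_dist. rewrite !Rminus_diag. replace (0 ^ 2 + 0 ^ 2) with 0 by ring. fold th. lra.
  - destruct (Hsub zs HzsD) as [L [HL HuL]].
    assert (Hlap : has_laplacian (fun y => u y + eta * sqr_dist z0 y) zs (L + eta * 4))
      by (apply has_laplacian_plus; [exact HuL | apply has_laplacian_scal, has_laplacian_sqr_dist]).
    generalize (has_laplacian_local_max _ zs _ Hlap Hlocmax). lra.
Qed.

(** * Bernstein-Walsh inequality *)

Definition abs_poly (a : nat -> R) (m : nat) (y : C) : R :=
  prodlt (fun l => Cmod (y - RtoC (a l))) m.

Definition log_abs_poly (a : nat -> R) (m : nat) (y : C) : R :=
  sumlt (fun l => ln (Cmod (y - RtoC (a l)))) m.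

Lemma exp_log_abs_poly (a : nat -> R) (m : nat) (y : C) :
  (forall l, (l < m)%nat -> y <> RtoC (a l)) -> exp (log_abs_poly a m y) = abs_poly a m y.
Proof.
  unfold log_abs_poly, abs_poly. induction m as [|m IH]; intros Hy; simpl; [apply exp_0|].
  rewrite exp_plus, IH by (intros l Hl; apply Hy; lia).
  rewrite exp_ln by (apply Cmod_sub_pos, Hy; lia). reflexivity.
Qed.

Lemma continuous_abs_poly (a : nat -> R) (m : nat) (z : C) : continuous (abs_poly a m) z.
Proof.
  unfold abs_poly. induction m as [|m IH]; simpl; [apply continuous_const|].
  apply (@continuous_mult C_UniformSpace R_AbsRing _ (fun y => Cmod (y - RtoC (a m)))).
  - exact IH.
  - apply continuous_Cmod_sub.
Qed.

Lemma continuous_log_abs_poly (a : nat -> R) (m : nat) (z : C) :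
  (forall l, (l < m)%nat -> z <> RtoC (a l)) -> continuous (log_abs_poly a m) z.
Proof.
  unfold log_abs_poly. induction m as [|m IH]; intros Hz; simpl; [apply continuous_const|].
  apply (@continuous_plus C_UniformSpace R_AbsRing R_NormedModule _
           (fun y => ln (Cmod (y - RtoC (a m))))).
  - apply IH. intros l Hl. apply Hz. lia.
  - apply (continuous_comp (fun y => Cmod (y - RtoC (a m))) ln); [apply continuous_Cmod_sub|].
    apply (@ex_derive_continuous R_AbsRing R_NormedModule). auto_derive.
    apply Cmod_sub_pos, Hz. lia.
Qed.

Lemma has_laplacian_log_abs_poly (a : nat -> R) (m : nat) (z : C) :
  (forall l, (l < m)%nat -> z <> RtoC (a l)) -> has_laplacian (log_abs_poly a m) z 0.
Proof.
  intros Hz. apply (has_laplacian_sumlt (fun l y => ln (Cmod (y - RtoC (a l))))).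
  intros l Hl. apply has_laplacian_log_dist, Hz, Hl.
Qed.

Lemma log_abs_poly_le (a : nat -> R) (m : nat) (y : C) :
  (forall l, (l < m)%nat -> y <> RtoC (a l)) -> (forall l, (l < m)%nat -> Rabs (a l) <= Cmod y) ->
  log_abs_poly a m y <= INR m * ln (2 * Cmod y).
Proof.
  intros Hy Ha. apply sumlt_le_const. intros l Hl. apply ln_le; [apply Cmod_sub_pos, Hy, Hl|].
  apply Rle_trans with (Cmod y + Cmod (- RtoC (a l))); [apply Cmod_triangle|].
  rewrite Cmod_opp, Cmod_R. generalize (Ha l Hl). lra.
Qed.

Definition off_K (K : R -> Prop) (z : C) : Prop := ~ (snd z = 0 /\ K (fst z)).

Lemma open_off_K (K : R -> Prop) : closed_set K -> open (off_K K).
Proof.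
  intros HK z Hz. apply locally_C. destruct (Req_dec (snd z) 0) as [Hs|Hs].
  - destruct (HK (fst z) (fun HKz => Hz (conj Hs HKz))) as [d Hd].
    exists d. split; [apply cond_pos|]. intros y Hy _ [_ HKy]. exact (Hd (fst y) Hy HKy).
  - exists (Rabs (snd z)). split; [apply Rabs_pos_lt, Hs|].
    intros y _ Hy [Hy0 _]. rewrite Hy0, Rminus_0_l, Rabs_Ropp in Hy. lra.
Qed.

Lemma off_K_neq (K : R -> Prop) (a : R) (z : C) : K a -> off_K K z -> z <> RtoC a.
Proof. intros Ha Hz ->. apply Hz. split; [reflexivity | exact Ha]. Qed.

Section BernsteinWalsh.

Variables (K : R -> Prop) (g : C -> R) (a : nat -> R) (m : nat) (N : R).
Hypothesis HK : closed_set K.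
Hypothesis Hg : regular_green K g.
Hypothesis Ha : forall l, (l < m)%nat -> K (a l).
Hypothesis HN : forall y, K y -> prodlt (fun l => Rabs (y - a l)) m <= N.

Lemma off_K_not_root (z : C) : off_K K z -> forall l, (l < m)%nat -> z <> RtoC (a l).
Proof. intros Hz l Hl. apply (off_K_neq K); [apply Ha, Hl | exact Hz]. Qed.

Lemma majorant_near_K (k c : R) : 0 < k -> N < c ->
  forall z, ~ off_K K z -> forall e, 0 < e ->
  locally z (fun y => off_K K y -> log_abs_poly a m y + - k * g y + - ln c < e).
Proof.
  intros Hk Hc z Hz e He. destruct Hg as [Hgc [Hg0 _]].
  apply NNPP in Hz as [Hz0 HKz].
  assert (Hzb : z = RtoC (fst z)) by (unfold RtoC; rewrite <- Hz0; apply surjective_pairing).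
  assert (HPz : abs_poly a m z < c).
  { rewrite Hzb. unfold abs_poly.
    erewrite prodlt_ext; [apply (Rle_lt_trans _ N); [apply HN, HKz | exact Hc]|].
    intros l _. apply Cmod_RtoC_sub. }
  assert (Hgz : g z = 0) by (rewrite Hzb; apply Hg0, HKz).
  assert (HP : locally z (fun y => 0 < c - abs_poly a m y)).
  { apply continuous_locally_pos; [|lra].
    apply (@continuous_minus C_UniformSpace R_AbsRing R_NormedModule (fun _ => c));
      [apply continuous_const | apply continuous_abs_poly]. }
  assert (HG : locally z (fun y => Rabs (g y - g z) < e / k)).
  { assert (Hek : 0 < e / k) by (apply Rdiv_lt_0_compat; lra).
    exact (proj1 (filterlim_locally _ _) (Hgc z) (mkposreal _ Hek)). }
  refine (filter_imp _ _ _ (filter_and _ _ HP HG)).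
  intros y [HPy Hgy] Hy. rewrite Hgz, Rminus_0_r in Hgy.
  destruct (Rabs_def2 _ _ Hgy) as [_ Hgy'].
  assert (Hlog : log_abs_poly a m y < ln c).
  { rewrite <- (ln_exp (log_abs_poly a m y)).
    apply ln_increasing; [apply exp_pos|].
    rewrite exp_log_abs_poly by (apply off_K_not_root, Hy). lra. }
  assert (k * (e / k) = e) by (field; lra). nra.
Qed.

Lemma majorant_at_infinity (c eps : R) : 0 < eps ->
  exists R0, forall z, off_K K z -> R0 <= Cmod z ->
    log_abs_poly a m z + - (INR m + eps) * g z + - ln c <= 0.
Proof.
  intros Heps. destruct Hg as [_ [_ [_ [M0 [Rg HM]]]]].
  destruct (ex_upper_bound_lt (fun l => Rabs (a l)) m) as [A HA].
  (* for ln|z| >= T the decay [- eps * ln|z|] outweighs the constants *)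
  set (T := (INR m * ln 2 + (INR m + eps) * M0 - ln c) / eps).
  exists (Rmax (Rmax (Rg + 1) A) (exp T)). intros z Hz Hbig.
  generalize (Rmax_l (Rmax (Rg + 1) A) (exp T)) (Rmax_r (Rmax (Rg + 1) A) (exp T))
    (Rmax_l (Rg + 1) A) (Rmax_r (Rg + 1) A) (exp_pos T).
  intros Hmax1 Hmax2 Hmax3 Hmax4 HT0. set (L := ln (Cmod z)).
  assert (HTL : T <= L) by (rewrite <- (ln_exp T); apply ln_le; lra).
  assert (Hgz : L - M0 <= g z)
    by (destruct (proj1 (Rabs_le_between _ _) (HM z ltac:(lra))); unfold L; lra).
  assert (Hlog : log_abs_poly a m z <= INR m * (ln 2 + L)).
  { unfold L. rewrite <- ln_mult by lra.
    apply log_abs_poly_le; [apply off_K_not_root, Hz | intros l Hl; generalize (HA l Hl); lra]. }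
  assert (Hk : 0 <= INR m + eps) by (generalize (pos_INR m); lra).
  assert (X1 : (INR m + eps) * (L - M0) <= (INR m + eps) * g z) by (apply Rmult_le_compat_l; lra).
  assert (X2 : eps * T <= eps * L) by (apply Rmult_le_compat_l; lra).
  assert (X3 : eps * T = INR m * ln 2 + (INR m + eps) * M0 - ln c) by (unfold T; field; lra).
  lra.
Qed.

Lemma log_abs_poly_le_green (c eps : R) : N < c -> 0 < c -> 0 < eps ->
  forall z, off_K K z -> log_abs_poly a m z <= ln c + (INR m + eps) * g z.
Proof.
  intros Hc Hc0 Heps z Hz. destruct Hg as [Hgc [_ [Hharm _]]].
  assert (Hk : 0 < INR m + eps) by (generalize (pos_INR m); lra).
  set (k := INR m + eps) in *.
  enough (H : log_abs_poly a m z + - k * g z + - ln c <= 0) by lra.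
  revert z Hz. apply subharmonic_max_principle.
  - exact (open_off_K K HK).
  - intros y Hy.
    apply (@continuous_plus C_UniformSpace R_AbsRing R_NormedModule _ (fun _ => - ln c));
      [|apply continuous_const].
    apply (@continuous_plus C_UniformSpace R_AbsRing R_NormedModule).
    + apply continuous_log_abs_poly, off_K_not_root, Hy.
    + apply (@continuous_scal C_UniformSpace R_AbsRing R_NormedModule (fun _ => - k));
        [apply continuous_const | apply Hgc].
  - intros y Hy. exists (0 + - k * 0 + 0). split; [lra|].
    apply has_laplacian_plus; [apply has_laplacian_plus | apply has_laplacian_const].
    + apply has_laplacian_log_abs_poly, off_K_not_root, Hy.
    + apply has_laplacian_scal, (harmonic_on_has_laplacian (off_K K));
        [exact (open_off_K K HK) | exact Hharm | exact Hy].
  - exact (majorant_near_K k c Hk Hc).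
  - exact (majorant_at_infinity c eps Heps).
Qed.

Lemma bernstein_walsh : 0 <= N -> forall z, off_K K z -> abs_poly a m z <= N * exp (INR m * g z).
Proof.
  intros HN0 z Hz.
  destruct (Rle_or_lt (abs_poly a m z) (N * exp (INR m * g z))) as [|Hgt]; [assumption|exfalso].
  rewrite <- exp_log_abs_poly in Hgt by (apply off_K_not_root, Hz).
  set (V := exp (log_abs_poly a m z - INR m * g z)).
  assert (HV : N < V).
  { apply (Rmult_lt_reg_r (exp (INR m * g z))); [apply exp_pos|].
    unfold V. rewrite <- exp_plus. replace (log_abs_poly a m z - INR m * g z + INR m * g z)
      with (log_abs_poly a m z) by ring. exact Hgt. }
  set (c := (N + V) / 2).
  assert (Hgap : ln c < ln V) by (apply ln_increasing; unfold c; lra).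
  (* [eps] is small enough that [eps * g z] cannot close the gap between [ln c] and [ln V] *)
  set (eps := (ln V - ln c) / (2 * (Rabs (g z) + 1))).
  assert (Hg1 : 0 < Rabs (g z) + 1) by (generalize (Rabs_pos (g z)); lra).
  assert (Heps : 0 < eps) by (apply Rdiv_lt_0_compat; lra).
  assert (Hkey := log_abs_poly_le_green c eps ltac:(unfold c; lra) ltac:(unfold c; lra) Heps z Hz).
  assert (HlnV : ln V = log_abs_poly a m z - INR m * g z) by apply ln_exp.
  assert (E1 : eps * (Rabs (g z) + 1) = (ln V - ln c) / 2) by (unfold eps; field; lra).
  assert (E2 : eps * g z <= eps * Rabs (g z)) by (apply Rmult_le_compat_l; [lra | apply Rle_abs]).
  lra.
Qed.

End BernsteinWalsh.

(** * Separation of quasi-Leja points *)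

Lemma abs_poly_gap (x : nat -> R) (i j : nat) (delta B : R) :
  (j < i)%nat -> 0 < delta -> 0 <= B ->
  abs_poly x i (x i, delta) <= prodlt (fun l => Rabs (x i - x l)) i * B ->
  delta <= Rabs (x i - x j) * B.
Proof.
  intros Hji Hdelta HB Hpoly. set (z := (x i, delta) : C) in *.
  assert (Hdist : forall l,
            Rabs (x i - x l) <= Cmod (z - RtoC (x l)) /\ delta <= Cmod (z - RtoC (x l))).
  { intros l. destruct (Cmod_sub_RtoC_ge z (x l)) as [H1 H2]. simpl in H1, H2.
    rewrite Rabs_pos_eq in H2 by lra. split; assumption. }
  set (Q := prodlt (fun l => if Nat.eqb l j then 1 else Cmod (z - RtoC (x l))) i).
  set (Q' := prodlt (fun l => if Nat.eqb l j then 1 else Rabs (x i - x l)) i).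
  assert (HQ : 0 < Q).
  { apply prodlt_pos. intros l _. destruct (Nat.eqb l j); [lra|].
    generalize (proj2 (Hdist l)). lra. }
  assert (HQ' : Q' <= Q).
  { apply prodlt_le_compat. intros l _. destruct (Nat.eqb l j); [lra|].
    split; [apply Rabs_pos | apply Hdist]. }
  unfold abs_poly in Hpoly.
  rewrite (prodlt_split (fun l => Cmod (z - RtoC (x l))) i j Hji),
          (prodlt_split (fun l => Rabs (x i - x l)) i j Hji) in Hpoly. fold Q Q' in Hpoly.
  assert (H1 : Q * delta <= Q * Cmod (z - RtoC (x j)))
    by (apply Rmult_le_compat_l; [lra | apply Hdist]).
  assert (H2 : Q' * Rabs (x i - x j) * B <= Q * Rabs (x i - x j) * B).
  { apply Rmult_le_compat_r; [exact HB|]. apply Rmult_le_compat_r; [apply Rabs_pos | exact HQ']. }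
  apply (Rmult_le_reg_l Q); [exact HQ|]. lra.
Qed.

Lemma is_G_above_K (K : R -> Prop) (g : C -> R) (delta M t : R) :
  is_G K g delta M -> 0 < delta -> K t -> g (t, delta) <= M.
Proof.
  intros [HG _] Hdelta Ht. apply HG. exists t. split; [exact Ht|].
  change (Cmod ((t, delta) - RtoC t) <= 2 * delta).
  rewrite Cmod_sub. unfold sqr_dist. cbn [fst snd RtoC].
  replace ((t - t) ^ 2 + (delta - 0) ^ 2) with (delta ^ 2) by ring.
  rewrite sqrt_pow2; lra.
Qed.

Lemma is_G_nonneg (K : R -> Prop) (g : C -> R) (delta M t : R) :
  regular_green K g -> is_G K g delta M -> 0 < delta -> K t -> 0 <= M.
Proof.
  intros [_ [Hg0 _]] [HG _] Hdelta Ht. rewrite <- (Hg0 t Ht). apply HG.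
  exists t. split; [exact Ht|].
  change (Cmod (RtoC t - RtoC t) <= 2 * delta). rewrite Cmod_RtoC_sub, Rminus_diag, Rabs_R0. lra.
Qed.

Lemma quasi_leja_sup_bound (K : R -> Prop) (tau : R) (x : nat -> R) (n i : nat) :
  quasi_leja K tau x n -> 0 < tau -> (1 <= i)%nat -> (i < n)%nat ->
  forall y, K y -> prodlt (fun l => Rabs (y - x l)) i <= prodlt (fun l => Rabs (x i - x l)) i / tau.
Proof.
  intros [_ HQL] Htau Hi1 Hi y Hy. apply (Rmult_le_reg_l tau); [exact Htau|].
  replace (tau * (_ / tau)) with (prodlt (fun l => Rabs (x i - x l)) i) by (field; lra).
  exact (HQL i Hi1 Hi y Hy).
Qed.

Lemma quasi_leja_gap (K : R -> Prop) (g : C -> R) (tau : R) (n : nat) (x : nat -> R) :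
  compact K -> regular_green K g -> 0 < tau -> quasi_leja K tau x n ->
  forall delta M : R, 0 < delta -> is_G K g delta M ->
  forall i j : nat, (i < n)%nat -> (j < i)%nat ->
    tau * delta * exp (- (INR n * M)) <= Rabs (x i - x j).
Proof.
  intros HKc Hg Htau HL delta M Hdelta HG i j Hi Hji.
  assert (HxK : forall l, (l < n)%nat -> K (x l)) by apply HL.
  assert (HM0 : 0 <= M) by (apply (is_G_nonneg K g delta M (x i)); auto).
  set (P0 := prodlt (fun l => Rabs (x i - x l)) i).
  assert (HP0 : 0 <= P0) by (apply prodlt_nonneg; intros; apply Rabs_pos).
  assert (HBW := bernstein_walsh K g x i (P0 / tau) (compact_P2 K HKc) Hg
                   (fun l Hl => HxK l ltac:(lia))
                   (quasi_leja_sup_bound K tau x n i HL Htau ltac:(lia) Hi)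
                   ltac:(apply Rdiv_le_0_compat; lra)
                   (x i, delta) ltac:(intros [H0 _]; simpl in H0; lra)).
  assert (Hgz := is_G_above_K K g delta M (x i) HG Hdelta (HxK i Hi)).
  assert (HE : exp (INR i * g (x i, delta)) <= exp (INR i * M))
    by (apply exp_le_compat, Rmult_le_compat_l; [apply pos_INR | exact Hgz]).
  assert (Hgap : delta <= Rabs (x i - x j) * (exp (INR i * M) / tau)).
  { apply (abs_poly_gap x i j);
      [exact Hji | exact Hdelta | left; apply Rdiv_lt_0_compat; [apply exp_pos | lra]|].
    eapply Rle_trans; [exact HBW|]. fold P0.
    replace (P0 * (exp (INR i * M) / tau)) with (P0 / tau * exp (INR i * M)) by (field; lra).
    apply Rmult_le_compat_l; [apply Rdiv_le_0_compat; lra | exact HE]. }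
  apply Rle_trans with (tau * delta * exp (- (INR i * M))).
  - apply Rmult_le_compat_l; [nra|]. apply exp_le_compat.
    apply Ropp_le_contravar, Rmult_le_compat_r; [exact HM0|]. apply le_INR. lia.
  - apply (Rmult_le_compat_r (exp (- (INR i * M)))) in Hgap; [|left; apply exp_pos].
    apply (Rmult_le_compat_l tau) in Hgap; [|lra].
    replace (tau * (Rabs (x i - x j) * (exp (INR i * M) / tau) * exp (- (INR i * M))))
      with (Rabs (x i - x j) * exp (INR i * M + - (INR i * M))) in Hgap
      by (rewrite exp_plus; field; lra).
    rewrite Rplus_opp_r, exp_0, Rmult_1_r in Hgap. lra.
Qed.

Theorem lemma1 (K : R -> Prop) (g : C -> R) (tau : R) (n : nat) (x : nat -> R) :
  compact K ->
  regular_green K g ->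
  0 < tau <= 1 ->
  quasi_leja K tau x n ->
  forall delta M : R, 0 < delta -> is_G K g delta M ->
  forall i j : nat, (i < n)%nat -> (j < n)%nat -> i <> j ->
    tau * delta * exp (- (INR n * M)) <= Rabs (x i - x j).
Proof.
  intros HKc Hg [Htau _] HL delta M Hdelta HG i j Hi Hj Hij.
  destruct (Nat.lt_gt_cases i j) as [[Hlt|Hgt] _]; [exact Hij| |].
  - rewrite Rabs_minus_sym. now apply (quasi_leja_gap K g tau n x).
  - now apply (quasi_leja_gap K g tau n x).
Qed.
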